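(* For all $k\in\mathbb{N}$: (a) all off-diagonal entries of $\bar L^{(k)}+(c^{(k)}-\pi^{(k)})(c^{(k)}-\pi^{(k)})^T$ are nonpositive (and thus so are all off-diagonal entries of $\bar L^{(k)}$ and of $L^{(k)}$); (b) $L^{(k)}$ is a Laplacian matrix; (c) $S^{(k)}$ is positive semidefinite.
   Context: $\rho=1+\sqrt2$; $\alpha_t=\rho^{\nu(t+1)-1}+1$ ($\nu(i)$ the largest $j$ with $2^j\mid i$). For $k\in\mathbb{N}$ and $n=2^k-1$, $\pi^{(k)}=[\alpha_0,\dots,\alpha_{n-1}]\in\mathbb{R}^n$ (column vector), and $c^{(k)}\in\mathbb{R}^n$ is defined by $c^{(1)}=[2(\rho-1)]$, $c^{(k+1)}=[\pi^{(k)},(1+\rho^{-k})(\rho^{k-1}+1),\rho c^{(k)}-(\rho-1-\rho^{-k})\pi^{(k)}]$. Let $d^{(k)}=c^{(k)}-\pi^{(k)}$ and $N^{(k)}=\bar L^{(k)}+d^{(k)}(d^{(k)})^T$. Define $\bar L^{(1)}=[2(\rho-1)]$ and, in block form with blocks of sizes $n,1,n$, $$\bar L^{(k+1)}=\begin{bmatrix}N^{(k)}&-\rho^k d^{(k)}&0\\-\rho^k (d^{(k)})^T&(\rho^{k-1}+1)(\rho^{k+1}+1)&-\rho(\pi^{(k)})^T\\0&-\rho\pi^{(k)}&\rho^2N^{(k)}\end{bmatrix}-d^{(k+1)}(d^{(k+1)})^T.$$ Define $L^{(k)}=\begin{bmatrix}\bar L^{(k)}&-c^{(k)}\\-(c^{(k)})^T&2(\rho^k-1)\end{bmatrix}\in\mathbb{R}^{(n+1)\times(n+1)}$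 and $S^{(k)}=\begin{bmatrix}1/\sqrt2&(-e_1+e_{n+1})^T\\-e_1+e_{n+1}&L^{(k)}\end{bmatrix}\in\mathbb{R}^{(n+2)\times(n+2)}$, where $e_1,e_{n+1}$ are standard basis vectors of $\mathbb{R}^{n+1}$. A Laplacian matrix is a symmetric matrix whose off-diagonal entries are nonpositive and whose row sums are all $0$. *)

From HB Require Import structures.
From mathcomp Require Import all_boot all_order all_algebra.
Set Implicit Arguments. Unset Strict Implicit. Unset Printing Implicit Defensive.
Import Order.TTheory GRing.Theory Num.Theory.
Local Open Scope ring_scope.

Section Defs.
Variable R : rcfType.

Definition rho : R := 1 + Num.sqrt 2.

Definition nu (i : nat) : nat := logn 2 i.

Definition alpha (t : nat) : R := rho ^ ((nu t.+1)%:Z - 1) + 1.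

Definition dim (k : nat) : nat := (2 ^ k).-1.

(* Vectors / matrices of level k are represented as functions on nat,
   only the indices < dim k are meaningful. *)

Definition piv (k : nat) (i : nat) : R := alpha i.

(* c^(k), defined for k >= 1 *)
Fixpoint cv (k : nat) : nat -> R :=
  match k with
  | 0 => fun _ => 0
  | k'.+1 =>
    if k' == 0%N then (fun _ => 2 * (rho - 1)) else
    let n := dim k' in
    fun i => if (i < n)%N then piv k' i
             else if i == n then (1 + rho ^- k') * (rho ^+ k'.-1 + 1)
             else rho * cv k' (i - n.+1)%N - (rho - 1 - rho ^- k') * piv k' (i - n.+1)%N
  end.

Definition dv (k : nat) (i : nat) : R := cv k i - piv k i.

(* the block matrix [[N, -rho^k d, 0], [-rho^k d^T, D, -rho pi^T], [0, -rho pi, rho^2 N]]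
   at level k (block sizes n,1,n with n = dim k), given N = N^(k) *)
Definition blk (k : nat) (N : nat -> nat -> R) (i j : nat) : R :=
  let n := dim k in
  if (i < n)%N then
    if (j < n)%N then N i j
    else if j == n then - rho ^+ k * dv k i
    else 0
  else if i == n then
    if (j < n)%N then - rho ^+ k * dv k j
    else if j == n then (rho ^+ k.-1 + 1) * (rho ^+ k.+1 + 1)
    else - rho * piv k (j - n.+1)%N
  else
    if (j < n)%N then 0
    else if j == n then - rho * piv k (i - n.+1)%N
    else rho ^+ 2 * N (i - n.+1)%N (j - n.+1)%N.

(* \bar L^(k), defined for k >= 1 *)
Fixpoint Lbarf (k : nat) : nat -> nat -> R :=
  match k with
  | 0 => fun _ _ => 0
  | k'.+1 =>
    if k' == 0%N then (fun _ _ => 2 * (rho - 1)) else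
    let Nk' := fun i j => Lbarf k' i j + dv k' i * dv k' j in
    fun i j => blk k' Nk' i j - dv k'.+1 i * dv k'.+1 j
  end.

Definition Nf (k : nat) (i j : nat) : R := Lbarf k i j + dv k i * dv k j.

Definition Nmx (k : nat) : 'M[R]_(dim k) := \matrix_(i, j) Nf k i j.
Definition Lbarmx (k : nat) : 'M[R]_(dim k) := \matrix_(i, j) Lbarf k i j.

Definition Lmx (k : nat) : 'M[R]_((dim k).+1) :=
  \matrix_(i, j)
    (if ((i < dim k) && (j < dim k))%N then Lbarf k i j
     else if (i < dim k)%N then - cv k i
     else if (j < dim k)%N then - cv k j
     else 2 * (rho ^+ k - 1)).

Definition evec (k : nat) : 'cV[R]_((dim k).+1) :=
  \col_i ((i == ord_max)%:R - (i == ord0)%:R).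

Definition Smx (k : nat) : 'M[R]_(1 + (dim k).+1) :=
  block_mx (1 / Num.sqrt 2)%:M (evec k)^T (evec k) (Lmx k).

End Defs.

Definition offdiag_nonpos (R : numDomainType) (m : nat) (A : 'M[R]_m) : Prop :=
  forall i j : 'I_m, i != j -> A i j <= 0.

Definition laplacian (R : numDomainType) (m : nat) (A : 'M[R]_m) : Prop :=
  [/\ A^T = A, offdiag_nonpos A & forall i : 'I_m, \sum_(j < m) A i j = 0].

Definition psd (R : numDomainType) (m : nat) (A : 'M[R]_m) : Prop :=
  A^T = A /\ forall x : 'cV[R]_m, 0 <= (x^T *m A *m x) 0 0.

(* Since rho^2 = 2 rho + 1 and nu(2^k + t) = nu(t) for 0 < t < 2^k, the vector
   pi^(k+1) is pi^(k), then rho^(k-1) + 1, then pi^(k) again, so the entries of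
   pi^(k) add up to rho^k - 1; the recursion for c^(k) shows that d^(k) >= 0 has
   the same sum.
   By construction N^(k+1) is the block matrix built from N^(k), so induction
   gives nonpositive off-diagonal entries of N^(k) and the row sums
   c_i + d_i (rho^k - 1); hence the rows of \bar L^(k) add up to c^(k), and
   L^(k) is a Laplacian.  For a Laplacian, 2 x^T L x = sum_ij (-L_ij)(x_i - x_j)^2
   >= 2 (-L_pq)(x_p - x_q)^2, and -L_(n+1,1) = c_1 >= sqrt 2, so the quadratic
   form of S^(k) at (a, x) is at least a^2/sqrt 2 + 2 a t + sqrt 2 t^2
   = (a + sqrt 2 t)^2 / sqrt 2 with t = x_(n+1) - x_1. *)

From Pilot Require Import Defs.
From HB Require Import structures.
From mathcomp Require Import all_boot all_order all_algebra.
From mathcomp Require Import ring lra zify.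
Import Order.TTheory GRing.Theory Num.Theory.
Set Implicit Arguments. Unset Strict Implicit. Unset Printing Implicit Defensive.
Local Open Scope ring_scope.

(* Without this, [dim] resolves to the dimension of a vector space. *)
Local Notation dim := Defs.dim.

Lemma logn_pexpD p k t : prime p -> (0 < t < p ^ k)%N ->
  logn p (p ^ k + t) = logn p t.
Proof.
move=> p_pr /andP[t_gt0 t_lt].
have [q p_q def_t] := pfactor_coprime p_pr t_gt0.
set a := logn p t in def_t *.
have a_lt_k : (a < k)%N.
  rewrite -(ltn_exp2l _ _ (prime_gt1 p_pr)); apply: leq_ltn_trans t_lt.
  by move: t_gt0; rewrite def_t muln_gt0 => /andP[q_gt0 _]; rewrite leq_pmull.
have -> : (p ^ k + t = (p * p ^ (k - a).-1 + q) * p ^ a)%N.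
  by rewrite def_t mulnDl -expnS prednK ?subn_gt0 // -expnD subnK // ltnW.
by rewrite logn_Gauss ?pfactorK // -coprime_modr mulnC modnMDl coprime_modr.
Qed.

Lemma big_nat_split_mid (V : nmodType) n (f : nat -> V) :
  \sum_(0 <= j < n + n.+1) f j =
  \sum_(0 <= j < n) f j + f n + \sum_(0 <= j < n) f (n.+1 + j)%N.
Proof.
rewrite !big_mkord big_split_ord big_ord_recl /= -addrA addn0; congr (_ + (_ + _)).
by apply: eq_bigr => i _; rewrite /= /bump /= add1n addnS.
Qed.

Lemma addSn_ltnF n t : (n.+1 + t < n)%N = false.
Proof. by apply/negbTE; lia. Qed.

Lemma addSn_eqF n t : (n.+1 + t == n) = false.
Proof. by apply/negbTE; lia. Qed.

Variant split_mid_spec (n : nat) : nat -> Type :=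
  | SplitLeft i of (i < n)%N : split_mid_spec n i
  | SplitMid : split_mid_spec n n
  | SplitRight t of (t < n)%N : split_mid_spec n (n.+1 + t).

Lemma split_midP n i : (i < n + n.+1)%N -> split_mid_spec n i.
Proof.
move=> i_lt; case: (ltnP i n) => [i_lt_n|i_ge_n]; first exact: SplitLeft.
have [->|i_neq_n] := eqVneq i n; first exact: SplitMid.
have -> : i = (n.+1 + (i - n.+1))%N by lia.
by apply: SplitRight; lia.
Qed.

Lemma offdiag_nonpos_mx (F : numDomainType) m (f : nat -> nat -> F) :
  (forall i j, (i < m)%N -> (j < m)%N -> i != j -> f i j <= 0) ->
  offdiag_nonpos (\matrix_(i, j < m) f i j).
Proof. by move=> f_le0 i j i_neq_j; rewrite mxE f_le0. Qed.

Section LaplacianQuadForm.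
Variables (F : realFieldType) (m : nat).
Implicit Types (A : 'M[F]_m) (y : 'cV[F]_m).

Lemma quad_formE A y :
  (y^T *m A *m y) 0 0 = \sum_i \sum_j y i 0 * A i j * y j 0.
Proof.
rewrite mxE; under eq_bigr => j _ do rewrite mxE mulr_suml.
rewrite [RHS]exchange_big; apply: eq_bigr => i _; apply: eq_bigr => j _.
by rewrite mxE.
Qed.

Lemma laplacian_symE A : laplacian A -> forall i j, A i j = A j i.
Proof. by case=> A_sym _ _ i j; rewrite -{1}A_sym mxE. Qed.

Lemma laplacian_quad_formE A y : laplacian A ->
  2 * (y^T *m A *m y) 0 0 = \sum_i \sum_j - A i j * (y i 0 - y j 0) ^+ 2.
Proof.
move=> lapA; have [_ _ row_sum0] := lapA.
have col_sum0 j : \sum_i A i j = 0.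
  by rewrite -[RHS](row_sum0 j); apply: eq_bigr => i _; rewrite laplacian_symE.
have expand i : \sum_j - A i j * (y i 0 - y j 0) ^+ 2 =
    2 * \sum_j y i 0 * A i j * y j 0 - y i 0 ^+ 2 * \sum_j A i j
    - \sum_j A i j * y j 0 ^+ 2.
  by rewrite !mulr_sumr -!sumrB; apply: eq_bigr => j _; ring.
under [RHS]eq_bigr => i _ do rewrite expand row_sum0 mulr0 subr0.
rewrite sumrB.
have -> : \sum_i \sum_j A i j * y j 0 ^+ 2 = 0.
  by rewrite exchange_big big1 // => j _; rewrite -mulr_suml col_sum0 mul0r.
by rewrite subr0 quad_formE mulr_sumr.
Qed.

Lemma laplacian_quad_form_ge A y p q : laplacian A -> p != q ->
  - A p q * (y p 0 - y q 0) ^+ 2 <= (y^T *m A *m y) 0 0.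
Proof.
move=> lapA p_neq_q; have [_ A_offdiag _] := lapA.
pose g i j := - A i j * (y i 0 - y j 0) ^+ 2.
have g_ge0 i j : 0 <= g i j.
  have [<-|i_neq_j] := eqVneq i j; first by rewrite /g subrr expr0n mulr0.
  by rewrite mulr_ge0 ?sqr_ge0 // oppr_ge0 A_offdiag.
have gqp : g q p = g p q.
  by rewrite /g (laplacian_symE lapA) -opprB sqrrN.
suff : g p q + g q p <= \sum_i \sum_j g i j.
  by rewrite -laplacian_quad_formE // gqp /g; lra.
have g_le_row i j : g i j <= \sum_j' g i j'.
  by rewrite (bigD1 j) //= lerDl sumr_ge0.
apply: le_trans (lerD (g_le_row p q) (g_le_row q p)) _.
rewrite [leRHS](bigD1 p) //= lerD2l [leRHS](bigD1 q) 1?eq_sym //=.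
by rewrite lerDl; apply: sumr_ge0 => i _; apply: sumr_ge0.
Qed.

End LaplacianQuadForm.

Lemma psd_block_laplacian (F : realFieldType) m (A : 'M[F]_m) p q s :
  laplacian A -> p != q -> 0 < s -> s <= - A q p ->
  let e := \col_i ((i == q)%:R - (i == p)%:R) in
  psd (block_mx (1 / s)%:M e^T e A).
Proof.
move=> lapA p_neq_q s_gt0 s_le e; have [A_sym _ _] := lapA.
split; first by rewrite tr_block_mx trmxK tr_scalar_mx A_sym.
have eE : e = delta_mx q 0 - delta_mx p 0.
  by apply/matrixP => i j; rewrite !mxE ord1 !andbT.
have mx11E (M N : 'M[F]_1) : (M + N) 0 0 = M 0 0 + N 0 0 by rewrite mxE.
move=> x; rewrite -[x]vsubmxK; move: (usubmx x) (dsubmx x) => u y.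
rewrite tr_col_mx mul_row_block mul_row_col !mulmxDl !mx11E.
have eTy : e^T *m y = row q y - row p y.
  by rewrite eE linearB /= !trmx_delta mulmxBl -!rowE.
have yTe : y^T *m e = (row q y - row p y)^T by rewrite -eTy trmx_mul trmxK.
have q_neq_p : q != p by rewrite eq_sym.
have := laplacian_quad_form_ge y lapA q_neq_p.
set Q := (y^T *m A *m y) 0 0.
rewrite [u]mx11_scalar tr_scalar_mx -!mulmxA !mul_scalar_mx mulmxA yTe eTy.
rewrite mul_mx_scalar !mxE eqxx mulr1n.
set a := u 0 0; set t := y q 0 - y p 0 => Q_ge.
have stQ : s * t ^+ 2 <= Q by apply: le_trans Q_ge; rewrite ler_wpM2r ?sqr_ge0.
have square_ge0 : 0 <= (a + s * t) ^+ 2 / s by rewrite divr_ge0 ?sqr_ge0 ?ltW.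
have -> : a * (1 / s * a) + a * t + (a * t + Q) =
    (a + s * t) ^+ 2 / s + (Q - s * t ^+ 2).
  by field; rewrite lt0r_neq0.
by rewrite addr_ge0 ?subr_ge0.
Qed.

Section Construction.
Variable R : rcfType.
Local Notation rho := (rho R).
Local Notation alpha := (alpha R).
Local Notation cv := (cv R).
Local Notation dv := (dv R).
Local Notation Nf := (Nf R).
Local Notation Lbarf := (Lbarf R).

Lemma sqrt2_gt0 : 0 < Num.sqrt 2 :> R.
Proof. by rewrite sqrtr_gt0 ltr0n. Qed.

Lemma sqr_sqrt2 : Num.sqrt 2 ^+ 2 = 2 :> R.
Proof. by rewrite sqr_sqrtr // ler0n. Qed.

Lemma rho_sqr : rho ^+ 2 = 2 * rho + 1.
Proof. have := sqr_sqrt2; rewrite /Defs.rho => h; ring: h. Qed.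

Lemma rho_gt0 : 0 < rho.
Proof. have := sqrt2_gt0; rewrite /Defs.rho; lra. Qed.

Lemma rhoX_gt0 n : 0 < rho ^+ n.
Proof. exact: exprn_gt0 rho_gt0. Qed.

Lemma invrho : rho^-1 = rho - 2.
Proof.
apply: (mulfI (lt0r_neq0 rho_gt0)); rewrite mulfV ?lt0r_neq0 ?rho_gt0 //.
by have := rho_sqr => h; ring: h.
Qed.

Lemma invrhoXS n : rho ^- n.+1 = (rho - 2) / rho ^+ n.
Proof. by rewrite exprS invfM invrho. Qed.

Lemma dimS k : dim k.+1 = (dim k + (dim k).+1)%N.
Proof. by rewrite /dim expnS; have := expn_gt0 2 k; lia. Qed.

Lemma dimS_gt0 k : (0 < dim k.+1)%N.
Proof. by rewrite /dim expnS; have := expn_gt0 2 k; lia. Qed.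

Lemma alpha_gt0 t : 0 < alpha t.
Proof. by rewrite /Defs.alpha addr_gt0 ?exprz_gt0 ?rho_gt0. Qed.

Lemma alpha0 : alpha 0 = Num.sqrt 2.
Proof. by rewrite /Defs.alpha /nu logn1 /= exprN1 invrho /Defs.rho; ring. Qed.

Lemma alpha_dim k : alpha (dim k.+1) = rho ^+ k + 1.
Proof.
rewrite /Defs.alpha /nu /dim prednK ?expn_gt0 // pfactorK //.
by rewrite -addn1 PoszD addrK exprnP.
Qed.

Lemma alpha_dimD k t : (t < dim k)%N -> alpha ((dim k).+1 + t) = alpha t.
Proof.
move=> t_lt; rewrite /Defs.alpha /nu -addnS /Defs.dim prednK ?expn_gt0 //.
by rewrite logn_pexpD //; move: t_lt; rewrite /Defs.dim; lia.
Qed.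

Lemma sum_dimS k (f : nat -> R) :
  \sum_(0 <= j < dim k.+1) f j =
  \sum_(0 <= j < dim k) f j + f (dim k) + \sum_(0 <= j < dim k) f ((dim k).+1 + j)%N.
Proof. by rewrite dimS big_nat_split_mid. Qed.

Section Blocks.
Variables (k : nat) (N : nat -> nat -> R).
Local Notation n := (dim k).

Lemma blk_ll i j : (i < n)%N -> (j < n)%N -> blk k N i j = N i j.
Proof. by move=> i_lt j_lt; rewrite /blk i_lt j_lt. Qed.

Lemma blk_lm i : (i < n)%N -> blk k N i n = - rho ^+ k * dv k i.
Proof. by move=> i_lt; rewrite /blk i_lt ltnn eqxx. Qed.

Lemma blk_lr i t : (i < n)%N -> blk k N i (n.+1 + t) = 0.
Proof. by move=> i_lt; rewrite /blk i_lt addSn_ltnF addSn_eqF. Qed.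

Lemma blk_ml j : (j < n)%N -> blk k N n j = - rho ^+ k * dv k j.
Proof. by move=> j_lt; rewrite /blk j_lt ltnn eqxx. Qed.

Lemma blk_mm : blk k N n n = (rho ^+ k.-1 + 1) * (rho ^+ k.+1 + 1).
Proof. by rewrite /blk ltnn eqxx. Qed.

Lemma blk_mr t : blk k N n (n.+1 + t) = - rho * piv R k t.
Proof. by rewrite /blk ltnn eqxx addSn_ltnF addSn_eqF addKn. Qed.

Lemma blk_rl t j : (j < n)%N -> blk k N (n.+1 + t) j = 0.
Proof. by move=> j_lt; rewrite /blk j_lt addSn_ltnF addSn_eqF. Qed.

Lemma blk_rm t : blk k N (n.+1 + t) n = - rho * piv R k t.
Proof. by rewrite /blk ltnn eqxx addSn_ltnF addSn_eqF addKn. Qed.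

Lemma blk_rr t u : blk k N (n.+1 + t) (n.+1 + u) = rho ^+ 2 * N t u.
Proof. by rewrite /blk !addSn_ltnF !addSn_eqF !addKn. Qed.

Lemma blk_sym : (forall i j, N i j = N j i) -> forall i j, blk k N i j = blk k N j i.
Proof.
move=> N_sym i j; rewrite /blk.
case: (ltnP i n) => _; case: (ltnP j n) => _ //.
by case: (eqVneq i n); case: (eqVneq j n); rewrite // N_sym.
Qed.

End Blocks.

Lemma sum_alpha k : \sum_(0 <= j < dim k.+1) alpha j = rho ^+ k.+1 - 1.
Proof.
elim: k => [|k IHk]; first by rewrite big_nat1 alpha0 /Defs.rho; ring.
rewrite sum_dimS alpha_dim IHk.
under eq_big_nat => t /andP[_ t_lt] do rewrite alpha_dimD //.
by rewrite IHk !exprS; have := rho_sqr => h; ring: h.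
Qed.

Lemma dv1 : dv 1 0 = Num.sqrt 2.
Proof. by rewrite /dv /piv alpha0 /= /Defs.rho; ring. Qed.

Lemma cv_left k i : (i < dim k.+1)%N -> cv k.+2 i = alpha i.
Proof. by move=> i_lt; rewrite /= i_lt. Qed.

Lemma cv_mid k : cv k.+2 (dim k.+1) = (1 + rho ^- k.+1) * (rho ^+ k + 1).
Proof. by rewrite /= ltnn eqxx. Qed.

Lemma cv_right k t :
  cv k.+2 ((dim k.+1).+1 + t) = rho * cv k.+1 t - (rho - 1 - rho ^- k.+1) * alpha t.
Proof. by rewrite [LHS]/= addSn_ltnF addSn_eqF addKn. Qed.

Lemma dv_left k i : (i < dim k.+1)%N -> dv k.+2 i = 0.
Proof. by move=> i_lt; rewrite /dv cv_left ?subrr. Qed.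

Lemma dv_mid k : dv k.+2 (dim k.+1) = rho ^- k.+1 * (rho ^+ k + 1).
Proof. by rewrite /dv cv_mid /piv alpha_dim; ring. Qed.

Lemma dv_right k t : (t < dim k.+1)%N ->
  dv k.+2 ((dim k.+1).+1 + t) = rho * dv k.+1 t + rho ^- k.+1 * alpha t.
Proof. by move=> t_lt; rewrite /dv cv_right /piv alpha_dimD //; ring. Qed.

Lemma dv_ge0 k i : (i < dim k.+1)%N -> 0 <= dv k.+1 i.
Proof.
elim: k i => [|k IHk] i.
  by rewrite ltnS leqn0 => /eqP ->; rewrite dv1 ltW ?sqrt2_gt0.
rewrite dimS => i_lt; case: (split_midP i_lt) => [j j_lt||t t_lt].
- by rewrite dv_left.
- by rewrite dv_mid mulr_ge0 ?invr_ge0 ?addr_ge0 ?ltW ?rhoX_gt0.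
- by rewrite dv_right // addr_ge0 ?mulr_ge0 ?invr_ge0 ?IHk ?ltW ?rho_gt0 ?rhoX_gt0 ?alpha_gt0.
Qed.

Lemma sum_dv k : \sum_(0 <= j < dim k.+1) dv k.+1 j = rho ^+ k.+1 - 1.
Proof.
elim: k => [|k IHk]; first by rewrite big_nat1 dv1 /Defs.rho; ring.
rewrite sum_dimS dv_mid.
under eq_big_nat => t /andP[_ t_lt] do rewrite dv_left //.
under [X in _ + _ + X]eq_big_nat => t /andP[_ t_lt] do rewrite dv_right //.
rewrite big1_eq big_split /= -!mulr_sumr IHk sum_alpha invrhoXS !exprS.
by have := rho_sqr => h; field: h; rewrite lt0r_neq0 ?rhoX_gt0.
Qed.

Lemma Lbarf_rec k i j :
  Lbarf k.+2 i j = blk k.+1 (Nf k.+1) i j - dv k.+2 i * dv k.+2 j.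
Proof. by []. Qed.

Lemma Nf_rec k i j : Nf k.+2 i j = blk k.+1 (Nf k.+1) i j.
Proof. by rewrite /Nf /= subrK. Qed.

Lemma Nf_offdiag_le0 k i j : (i < dim k.+1)%N -> (j < dim k.+1)%N -> i != j ->
  Nf k.+1 i j <= 0.
Proof.
elim: k i j => [|k IHk] i j; first by rewrite !ltnS !leqn0 => /eqP -> /eqP ->.
have rho_ge0 := ltW rho_gt0; have rhoX_ge0 := ltW (rhoX_gt0 k.+1).
rewrite dimS Nf_rec => i_lt j_lt.
case: (split_midP i_lt) j_lt => [i' i'_lt||t t_lt] j_lt;
  case: (split_midP j_lt) => [j' j'_lt||u u_lt] i_neq_j //.
- by rewrite blk_ll // IHk.
- by rewrite blk_lm // mulNr oppr_le0 mulr_ge0 // dv_ge0.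
- by rewrite blk_lr.
- by rewrite blk_ml // mulNr oppr_le0 mulr_ge0 // dv_ge0.
- by rewrite eqxx in i_neq_j.
- by rewrite blk_mr mulNr oppr_le0 mulr_ge0 // ltW // alpha_gt0.
- by rewrite blk_rl.
- by rewrite blk_rm mulNr oppr_le0 mulr_ge0 // ltW // alpha_gt0.
- rewrite blk_rr mulr_ge0_le0 ?sqr_ge0 // IHk //.
  by apply: contra i_neq_j => /eqP ->.
Qed.

Lemma Lbarf_sym k i j : Lbarf k i j = Lbarf k j i.
Proof.
elim: k i j => [|[|k] IHk] i j //.
rewrite !Lbarf_rec [dv k.+2 j * _]mulrC; congr (_ - _); apply: blk_sym => {}i {}j.
by rewrite /Nf IHk mulrC.
Qed.

Lemma Nf_row_sum k i : (i < dim k.+1)%N ->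
  \sum_(0 <= j < dim k.+1) Nf k.+1 i j = cv k.+1 i + dv k.+1 i * (rho ^+ k.+1 - 1).
Proof.
elim: k i => [|k IHk] i.
  rewrite ltnS leqn0 => /eqP ->; rewrite big_nat1 /Nf dv1 /= /Defs.rho.
  by have := sqr_sqrt2 => h; ring: h.
have rhoX_neq0 := lt0r_neq0 (rhoX_gt0 k).
rewrite sum_dimS dimS => i_lt; case: (split_midP i_lt) => [j j_lt||t t_lt].
- under eq_big_nat => j' /andP[_ j'_lt] do rewrite Nf_rec blk_ll //.
  under [X in _ + _ + X]eq_big_nat => j' _ do rewrite Nf_rec blk_lr //.
  by rewrite Nf_rec blk_lm // big1_eq IHk // dv_left // cv_left // /dv /piv; ring.
- under eq_big_nat => j' /andP[_ j'_lt] do rewrite Nf_rec blk_ml //.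
  under [X in _ + _ + X]eq_big_nat => j' _ do rewrite Nf_rec blk_mr //.
  rewrite Nf_rec blk_mm -!mulr_sumr sum_dv sum_alpha dv_mid cv_mid.
  by rewrite invrhoXS !exprS; have := rho_sqr => h; field: h.
- under eq_big_nat => j' /andP[_ j'_lt] do rewrite Nf_rec blk_rl //.
  under [X in _ + _ + X]eq_big_nat => j' _ do rewrite Nf_rec blk_rr //.
  rewrite Nf_rec blk_rm big1_eq -mulr_sumr IHk // dv_right //.
  rewrite cv_right /dv /piv invrhoXS !exprS.
  by have := rho_sqr => h; field: h.
Qed.

Lemma Lbarf_row_sum k i : (i < dim k.+1)%N ->
  \sum_(0 <= j < dim k.+1) Lbarf k.+1 i j = cv k.+1 i.
Proof.
move=> i_lt; apply: (addIr (dv k.+1 i * (rho ^+ k.+1 - 1))).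
by rewrite -Nf_row_sum // /Nf big_split /= -mulr_sumr sum_dv.
Qed.

Lemma sum_cv k : \sum_(0 <= j < dim k.+1) cv k.+1 j = 2 * (rho ^+ k.+1 - 1).
Proof.
under eq_big_nat => j _ do rewrite -[cv _ j](subrK (piv R k.+1 j)).
by rewrite big_split /= sum_dv sum_alpha; ring.
Qed.

Lemma cv_ge0 k i : (i < dim k.+1)%N -> 0 <= cv k.+1 i.
Proof.
move=> i_lt; rewrite -[cv _ i](subrK (piv R k.+1 i)).
by rewrite addr_ge0 ?dv_ge0 ?ltW ?alpha_gt0.
Qed.

Lemma sqrt2_le_cv0 k : Num.sqrt 2 <= cv k.+1 0.
Proof.
case: k => [|k]; last by rewrite cv_left ?dimS_gt0 ?alpha0.
by rewrite /= /Defs.rho; have := sqrt2_gt0; lra.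
Qed.

Lemma Lbarf_offdiag_le0 k i j : (i < dim k.+1)%N -> (j < dim k.+1)%N -> i != j ->
  Lbarf k.+1 i j <= 0.
Proof.
move=> i_lt j_lt i_neq_j; have := Nf_offdiag_le0 i_lt j_lt i_neq_j.
by rewrite /Nf => /(le_trans _); apply; rewrite lerDl mulr_ge0 ?dv_ge0.
Qed.

Local Notation Lmx k := (Lmx R k).

Lemma Lmx_sym k : (Lmx k)^T = Lmx k.
Proof.
apply/matrixP => i j; rewrite !mxE Lbarf_sym andbC.
by case: (ltnP i (dim k)); case: (ltnP j (dim k)).
Qed.

Lemma Lmx_offdiag k : offdiag_nonpos (Lmx k.+1).
Proof.
move=> i j i_neq_j; rewrite mxE.
case: (ltnP i (dim k.+1)) => i_lt; case: (ltnP j (dim k.+1)) => j_lt /=.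
- exact: Lbarf_offdiag_le0.
- by rewrite oppr_le0 cv_ge0.
- by rewrite oppr_le0 cv_ge0.
- by exfalso; move: i_neq_j (ltn_ord i) (ltn_ord j); rewrite -val_eqE /=; lia.
Qed.

Lemma Lmx_row_sum k i : \sum_j Lmx k.+1 i j = 0.
Proof.
have widen_lt (j : 'I_(dim k.+1)) : (widen_ord (leqnSn _) j < dim k.+1)%N := ltn_ord j.
rewrite big_ord_recr !mxE ltnn andbF.
under eq_bigr => j _ do rewrite mxE widen_lt andbT.
case: (ltnP i (dim k.+1)) => [i_lt|_].
  by rewrite -(big_mkord xpredT (Lbarf k.+1 i)) Lbarf_row_sum //; exact: subrr.
by rewrite -(big_mkord xpredT (fun j => - cv k.+1 j)) sumrN sum_cv; exact: addNr.
Qed.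

Lemma Lmx_laplacian k : laplacian (Lmx k.+1).
Proof. by split; [exact: Lmx_sym|exact: Lmx_offdiag|exact: Lmx_row_sum]. Qed.

Lemma Smx_psd k : psd (Smx R k.+1).
Proof.
have ord0_neq_max : ord0 != ord_max :> 'I_(dim k.+1).+1.
  by rewrite -val_eqE /= neq_ltn dimS_gt0.
apply: psd_block_laplacian (Lmx_laplacian k) ord0_neq_max sqrt2_gt0 _.
by rewrite mxE ltnn /= dimS_gt0 opprK sqrt2_le_cv0.
Qed.

End Construction.

Theorem lemma14 (R : rcfType) (k : nat) (hk : (0 < k)%N) :
  [/\ offdiag_nonpos (Nmx R k),
      offdiag_nonpos (Lbarmx R k),
      offdiag_nonpos (Lmx R k),
      laplacian (Lmx R k)
    & psd (Smx R k)].
Proof.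
case: k hk => [//|k] _; split.
- exact: offdiag_nonpos_mx (@Nf_offdiag_le0 R k).
- exact: offdiag_nonpos_mx (@Lbarf_offdiag_le0 R k).
- exact: Lmx_offdiag.
- exact: Lmx_laplacian.
- exact: Smx_psd.
Qed.
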